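(* Let $D$ be an integral domain and $\star$ a semistar operation on $D$. Every $\widetilde{\star}$-universally catenarian domain $D$ is a $\widetilde{\star}$-stably strong S-domain.
   Context: Let $D$ be an integral domain with quotient field $K$, $\overline{\mathcal{F}}(D)$ the set of nonzero $D$-submodules of $K$. A semistar operation on $D$ is a map $\star:\overline{\mathcal{F}}(D)\to\overline{\mathcal{F}}(D)$ with $(xE)^\star=xE^\star$ for nonzero $x\in K$, $E\subseteq F\Rightarrow E^\star\subseteq F^\star$, and $E\subseteq E^\star=(E^\star)^\star$. $E^{\star_f}:=\bigcup\{F^\star:F\subseteq E\text{ nonzero finitely generated}\}$. For a semistar operation $\ast$, a nonzero ideal $I$ is a quasi-$\ast$-ideal if $I^\ast\cap D=I$; quasi-$\ast$-primes are prime quasi-$\ast$-ideals, quasi-$\ast$-maximal ideals are maximal among proper quasi-$\ast$-ideals. $E^{\widetilde\star}:=\bigcap\{ED_P:P\in\mathrm{QMax}^{\star_f}(D)\}$. For an indeterminate $X$: $\Theta:=\{Q\in\mathrm{Spec}(D[X]):Q\cap D=(0)\text{ or }(Q\cap D)^{\star_f}\subsetneq D^\star\}$, $\mathfrak S:=D[X][Y]\setminus\bigcup\{Q[Y]:Q\in\Theta\}$, and $E^{\star[X]}:=E[Y]_{\mathfrak S}\cap K(X)$ defines a semistar operation $\star[X]$ on $D[X]$, with $\widetilde\star[X]=\star[X]$; inductively $\star[n]:=(\star[X_1,\dots,X_{n-1}])[X_n]$ on $D[n]:=D[X_1,\dots,X_n]$. For a semistar operation $\ast$ on a domain $R$: $R$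 is $\ast$-catenary if for each pair $P\subset Q$ of quasi-$\ast$-primes, any two saturated chains of quasi-$\ast$-primes between them have the same finite length; $R$ is $\ast$-universally catenarian if $R[n]$ is $\ast[n]$-catenary for every $n\ge1$; $R$ is a $\ast$-strong S-domain if each pair of adjacent quasi-$\ast$-primes $P_1\subset P_2$ extends to adjacent quasi-$\ast[X]$-primes $P_1[X]\subset P_2[X]$; $R$ is a $\ast$-stably strong S-domain if $R[n]$ is a $\ast[n]$-strong S-domain for every $n\ge1$. *)

From HB Require Import structures.
From mathcomp Require Import all_boot all_order all_algebra.
From mathcomp Require Import boolp classical_sets.

Set Implicit Arguments.
Unset Strict Implicit.
Unset Printing Implicit Defensive.

Import GRing.Theory.
Local Open Scope ring_scope.
Local Open Scope classical_set_scope.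

(* Throughout, a domain is a subring [R : set L] of a field [L]; its
   "quotient field" is L (see [is_domain_qf]).  Subsets of L are [set L]. *)

Section Generic.
Variable L : fieldType.
Implicit Types (R E F I P Q : set L).

Definition is_subring R : Prop :=
  R 0 /\ R 1 /\ (forall x y, R x -> R y -> R (x - y)) /\
  (forall x y, R x -> R y -> R (x * y)).

Definition is_domain_qf R : Prop :=
  is_subring R /\ forall x : L, exists a b, R a /\ R b /\ b != 0 /\ x = a / b.

Definition is_frac_module R E : Prop :=
  E 0 /\ (forall x y, E x -> E y -> E (x + y)) /\
  (forall r x, R r -> E x -> E (r * x)) /\ (exists x, E x /\ x != 0).

Definition scale_set (x : L) E : set L := [set x * e | e in E].

Definition is_semistar R (st : set L -> set L) : Prop :=
  forall E F, is_frac_module R E -> is_frac_module R F ->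
    [/\ is_frac_module R (st E),
        (forall x, x != 0 -> st (scale_set x E) = scale_set x (st E)),
        (E `<=` F -> st E `<=` st F),
        E `<=` st E &
        st (st E) = st E].

Definition span R (s : seq L) : set L :=
  [set z | exists c : nat -> L, (forall i, R (c i)) /\
           z = \sum_(i < size s) c i * s`_i].

Definition starf R (st : set L -> set L) (E : set L) : set L :=
  [set z | exists s : seq L, is_frac_module R (span R s) /\
           span R s `<=` E /\ st (span R s) z].

(* nonzero ideals *)
Definition is_ideal R I : Prop := is_frac_module R I /\ I `<=` R.

(* prime ideals (the zero ideal allowed), i.e. elements of Spec(R) *)
Definition is_prime_ideal R Q : Prop :=
  Q `<=` R /\ Q 0 /\ (forall x y, Q x -> Q y -> Q (x + y)) /\
  (forall r x, R r -> Q x -> Q (r * x)) /\ ~ Q 1 /\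
  (forall a b, R a -> R b -> Q (a * b) -> Q a \/ Q b).

Definition quasi_ideal R (st : set L -> set L) I : Prop :=
  is_ideal R I /\ st I `&` R = I.

Definition quasi_prime R (st : set L -> set L) P : Prop :=
  quasi_ideal R st P /\ is_prime_ideal R P.

Definition quasi_max R (st : set L -> set L) P : Prop :=
  quasi_ideal R st P /\ P <> R /\
  (forall I, quasi_ideal R st I -> I <> R -> P `<=` I -> I = P).

(* E^{\tilde star} = \bigcap_{P in QMax^{star_f}(D)} E D_P *)
Definition stilde R (st : set L -> set L) (E : set L) : set L :=
  [set z | forall P, quasi_max R (starf R st) P ->
     exists x s, E x /\ R s /\ ~ P s /\ z = x / s].

Definition adjacent R (st : set L -> set L) P1 P2 : Prop :=
  quasi_prime R st P1 /\ quasi_prime R st P2 /\ P1 `<` P2 /\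
  ~ (exists P, quasi_prime R st P /\ P1 `<` P /\ P `<` P2).

Definition sat_chain R (st : set L -> set L) (c : nat -> set L) (n : nat) P Q
  : Prop :=
  c 0%N = P /\ c n = Q /\ (forall i, (i < n)%N -> adjacent R st (c i) (c i.+1)).

Definition catenary R (st : set L -> set L) : Prop :=
  forall P Q, quasi_prime R st P -> quasi_prime R st Q -> P `<` Q ->
  forall (c d : nat -> set L) (n m : nat),
    sat_chain R st c n P Q -> sat_chain R st d m P Q -> n = m.

End Generic.

Section PolyX.
Variable L : fieldType.
Implicit Types (R E F I P Q : set L).

Definition fracX (p : {poly L}) : {fraction {poly L}} := FracField.tofrac p.

Definition ringX R : set {fraction {poly L}} :=
  [set z | exists p : {poly L}, (forall i, R p`_i) /\ z = fracX p].

Definition extX P : set {fraction {poly L}} :=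
  [set z | exists p : {poly L}, (forall i, P p`_i) /\ z = fracX p].

Definition contr R (Q : set {fraction {poly L}}) : set L :=
  [set c | R c /\ Q (fracX c%:P)].

Definition Theta R (st : set L -> set L) (Q : set {fraction {poly L}}) : Prop :=
  is_prime_ideal (ringX R) Q /\
  (contr R Q = [set 0] \/ starf R st (contr R Q) `<` st R).

(* membership in the multiplicative set  D[X][Y] \ \bigcup_{Q in Theta} Q[Y] *)
Definition Smult R (st : set L -> set L) (s : {poly {fraction {poly L}}})
  : Prop :=
  (forall i, ringX R s`_i) /\
  (forall Q : set {fraction {poly L}}, Theta R st Q -> exists i, ~ Q s`_i).

(* E^{star[X]} = E[Y]_S \cap K(X) *)
Definition starX R (st : set L -> set L) (E : set {fraction {poly L}})
  : set {fraction {poly L}} :=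
  [set z | exists f s : {poly {fraction {poly L}}},
     (forall i, E f`_i) /\ Smult R st s /\ z%:P * s = f].

Definition strongS R (st : set L -> set L) : Prop :=
  forall P1 P2, adjacent R st P1 P2 ->
    adjacent (ringX R) (starX R st) (extX P1) (extX P2).

End PolyX.

Fixpoint Lt (K : fieldType) (n : nat) : fieldType :=
  match n with
  | 0 => K
  | m.+1 => {fraction {poly Lt K m}}
  end.

Fixpoint tower (K : fieldType) (D : set K) (st : set K -> set K) (n : nat)
  : (set (Lt K n) * (set (Lt K n) -> set (Lt K n)))%type :=
  match n return (set (Lt K n) * (set (Lt K n) -> set (Lt K n)))%type with
  | 0 => (D, st)
  | m.+1 => let p := tower D st m in (ringX p.1, starX p.1 p.2)
  end.

Definition Dn (K : fieldType) (D : set K) (st : set K -> set K) (n : nat) :=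
  (tower D st n).1.
Definition starn (K : fieldType) (D : set K) (st : set K -> set K) (n : nat) :=
  (tower D st n).2.

Arguments tower {K} D st n.
Arguments Dn {K} D st n.
Arguments starn {K} D st n.

Definition univ_catenarian (K : fieldType) (D : set K) (st : set K -> set K)
  : Prop :=
  forall n : nat, (0 < n)%N -> catenary (Dn D st n) (starn D st n).

Definition stably_strongS (K : fieldType) (D : set K) (st : set K -> set K)
  : Prop :=
  forall n : nat, (0 < n)%N -> strongS (Dn D st n) (starn D st n).

(* For an operation of the form star[X] the quasi-primes are exactly the nonzero primes
   in Theta, so a nonzero prime below a quasi-prime is again one; this holds in D[n] for
   n >= 1.  Let P1 < P2 be adjacent quasi-primes of R = D[n] and suppose a quasi-prime Q
   of R[X] lies strictly between P1[X] and P2[X].  Its contraction to R is then P1, and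
   since at most one prime of R[X] above P1[X] lies over P1 (a pseudo-division argument),
   P1[X] < Q < P2[X] < (P2, X) is a saturated chain of length 3, while
   P1[X] < (P1, X) < (P2, X) is one of length 2: this contradicts catenarity of R[X]. *)

From Pilot Require Import Defs.
From HB Require Import structures.
From mathcomp Require Import all_boot all_order all_algebra.
From mathcomp Require Import boolp classical_sets.
From mathcomp Require Import zify ring.

Set Implicit Arguments.
Unset Strict Implicit.
Unset Printing Implicit Defensive.
Import GRing.Theory.
Local Open Scope ring_scope.
Local Open Scope classical_set_scope.

Lemma not_subset_ex (T : Type) (A B : set T) : ~ (A `<=` B) -> exists x, A x /\ ~ B x.
Proof.
move=> nAB; apply: contrapT => nex; apply: nAB => x Ax.
by apply: contrapT => nBx; apply: nex; exists x.
Qed.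

Section Subrings.
Variable F : fieldType.
Implicit Types (A E P : set F) (p q : {poly F}).

(* an A-submodule of F, not required to be nonzero *)
Definition is_module A E := E 0 /\ (forall x y, E x -> E y -> E (x + y)) /\
  (forall r x, A r -> E x -> E (r * x)).

Lemma subring0 A : is_subring A -> A 0. Proof. by case. Qed.
Lemma subring1 A : is_subring A -> A 1. Proof. by case=> _ []. Qed.
Lemma subringB A x y : is_subring A -> A x -> A y -> A (x - y).
Proof. by case=> _ [_ []] H _; apply: H. Qed.
Lemma subringM A x y : is_subring A -> A x -> A y -> A (x * y).
Proof. by case=> _ [_ []] _ H; apply: H. Qed.
Lemma subringN A x : is_subring A -> A x -> A (- x).
Proof. by move=> HA Ax; rewrite -sub0r; apply: subringB => //; apply: subring0. Qed.
Lemma subringD A x y : is_subring A -> A x -> A y -> A (x + y).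
Proof. by move=> HA Ax Ay; rewrite -[y]opprK; apply: subringB => //; apply: subringN. Qed.
Lemma subringX A x n : is_subring A -> A x -> A (x ^+ n).
Proof.
move=> HA Ax; elim: n => [|n IH]; first by rewrite expr0; apply: subring1.
by rewrite exprS; apply: subringM.
Qed.

Lemma subring_module A : is_subring A -> is_module A A.
Proof.
by move=> HA; split; [apply: subring0|split=> *; [apply: subringD|apply: subringM]].
Qed.

Lemma subring_frac_module A : is_subring A -> is_frac_module A A.
Proof.
move=> HA; have [A0 [AD AM]] := subring_module HA.
by do 3!split=> //; exists 1; split; [apply: subring1|apply: oner_neq0].
Qed.

Lemma frac_module_module A E : is_frac_module A E -> is_module A E.
Proof. by case=> [? [? [? _]]]. Qed.

Lemma frac_module_nz A E : is_frac_module A E -> exists x, E x /\ x != 0.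
Proof. by case=> [_ [_ [_ H]]]. Qed.

Lemma moduleMl A E r x : is_module A E -> A r -> E x -> E (r * x).
Proof. by case=> [_ [_ H]]; apply: H. Qed.

Lemma moduleMr A E r x : is_module A E -> A r -> E x -> E (x * r).
Proof. by move=> HE Ar Ex; rewrite mulrC; apply: moduleMl HE Ar Ex. Qed.

Lemma moduleN A E x : is_subring A -> is_module A E -> E x -> E (- x).
Proof.
by move=> HA HE Ex; rewrite -mulN1r; apply: moduleMl HE (subringN HA (subring1 HA)) Ex.
Qed.

Lemma moduleB A E x y : is_subring A -> is_module A E -> E x -> E y -> E (x - y).
Proof. by move=> HA HE Ex Ey; case: (HE) => [_ [ED _]]; apply: ED Ex (moduleN HA HE Ey). Qed.

Definition coefs_in E p := forall i, E p`_i.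

Lemma coefs_inS E E' p : E `<=` E' -> coefs_in E p -> coefs_in E' p.
Proof. by move=> EE' Ep i; apply: EE'. Qed.

Lemma coefs_in0 A E : is_module A E -> coefs_in E 0.
Proof. by move=> [E0 _] i; rewrite coef0. Qed.

Lemma coefs_inC E c : E 0 -> E c -> coefs_in E c%:P.
Proof. by move=> E0 Ec i; rewrite coefC; case: (i == 0)%N. Qed.

Lemma coefs_in1 A : is_subring A -> coefs_in A 1.
Proof. by move=> HA; apply: coefs_inC; [apply: subring0|apply: subring1]. Qed.

Lemma coefs_inXn A n : is_subring A -> coefs_in A 'X^n.
Proof.
by move=> HA i; rewrite coefXn; case: (i == n)%N; [apply: subring1|apply: subring0].
Qed.

Lemma coefs_inX A : is_subring A -> coefs_in A 'X.
Proof. by move=> HA; have := coefs_inXn 1 HA; rewrite expr1. Qed.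

Lemma coefs_inD A E p q : is_module A E -> coefs_in E p -> coefs_in E q ->
  coefs_in E (p + q).
Proof. by move=> [_ [ED _]] Ep Eq i; rewrite coefD; apply: ED. Qed.

Lemma coefs_inB A E p q : is_subring A -> is_module A E ->
  coefs_in E p -> coefs_in E q -> coefs_in E (p - q).
Proof. by move=> HA HE Ep Eq i; rewrite coefB; apply: moduleB HA HE _ _. Qed.

Lemma coefs_inMl A E p q : is_module A E -> coefs_in A p -> coefs_in E q ->
  coefs_in E (p * q).
Proof.
move=> HE Ap Eq i; rewrite coefM; have [E0 [ED _]] := HE.
by apply: (big_ind E) => // j _; apply: moduleMl HE _ _.
Qed.

Lemma coefs_inMr A E p q : is_module A E -> coefs_in E p -> coefs_in A q ->
  coefs_in E (p * q).
Proof. by move=> HE Ep Aq; rewrite mulrC; apply: coefs_inMl HE Aq Ep. Qed.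

Lemma coefs_inM A p q : is_subring A -> coefs_in A p -> coefs_in A q ->
  coefs_in A (p * q).
Proof. by move=> HA; apply: coefs_inMl (subring_module HA). Qed.

Lemma coefs_inXp A p n : is_subring A -> coefs_in A p -> coefs_in A (p ^+ n).
Proof.
move=> HA Ap; elim: n => [|n IH]; first by rewrite expr0; apply: coefs_in1.
by rewrite exprS; apply: coefs_inM.
Qed.

Lemma coefs_in_poly E n (G : nat -> F) : E 0 -> (forall i, (i < n)%N -> E (G i)) ->
  coefs_in E (\poly_(i < n) G i).
Proof. by move=> E0 EG i; rewrite coef_poly; case: ifP => // /EG. Qed.

Lemma coefs_in_drop E n p : coefs_in E p -> coefs_in E (drop_poly n p).
Proof. by move=> Ep i; rewrite coef_drop_poly. Qed.

Lemma poly_drop1E p : p = drop_poly 1 p * 'X + (p`_0)%:P.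
Proof.
rewrite -{1}(poly_take_drop 1 p) expr1 addrC; congr (_ + _).
by apply/polyP=> -[|i]; rewrite coef_take_poly coefC.
Qed.

End Subrings.

(* Stated over an abstract ring because rewriting AC steps in place in
   {poly {fraction {poly L}}} is prohibitively slow. *)
Lemma mulrDl_AC (R : comPzRingType) (a b s t : R) :
  (a + b) * (s * t) = a * s * t + b * t * s.
Proof. ring. Qed.

Lemma mulrDl_ACA (R : comPzRingType) (p x c s t : R) :
  (p * x + c) * (s * t) = p * s * (x * t) + c * t * s.
Proof. ring. Qed.

Section GaussLemma.
Variable F : fieldType.
Implicit Types (A P : set F) (p q : {poly F}).

Lemma prime_sub A P : is_prime_ideal A P -> P `<=` A. Proof. by case. Qed.
Lemma prime0 A P : is_prime_ideal A P -> P 0. Proof. by case=> _ []. Qed.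
Lemma prime1 A P : is_prime_ideal A P -> ~ P 1. Proof. by case=> _ [_ [_ [_ []]]]. Qed.
Lemma primeM A P a b : is_prime_ideal A P -> A a -> A b -> P (a * b) -> P a \/ P b.
Proof. by case=> _ [_ [_ [_ [_ H]]]]; apply: H. Qed.

Lemma prime_notin_neq0 A P x : is_prime_ideal A P -> ~ P x -> x != 0.
Proof. by move=> HP; apply: contra_notN => /eqP ->; apply: prime0 HP. Qed.

Lemma prime_module A P : is_prime_ideal A P -> is_module A P.
Proof. by case=> [_ [? [? [? _]]]]. Qed.

Lemma primeX A P a n : is_subring A -> is_prime_ideal A P -> A a -> P (a ^+ n) -> P a.
Proof.
move=> HA HP Aa; elim: n => [|n IH]; first by rewrite expr0 => /(prime1 HP).
by rewrite exprS => /(primeM HP Aa (subringX n HA Aa)) [].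
Qed.

Lemma last_coef_notin P p : P 0 -> ~ coefs_in P p ->
  exists i, ~ P p`_i /\ forall k, (i < k)%N -> P p`_k.
Proof.
move=> P0 nPp.
suff : forall n, (forall k, (n <= k)%N -> P p`_k) ->
    exists i, ~ P p`_i /\ forall k, (i < k)%N -> P p`_k.
  by move/(_ (size p)); apply=> k Hk; rewrite nth_default.
elim=> [|n IH] Pn; first by exfalso; apply: nPp => k; apply: Pn.
have [Pnp|] := pselect (P p`_n); last by exists n.
by apply: IH => k; rewrite leq_eqVlt => /orP[/eqP <- //|]; apply: Pn.
Qed.

(* In the coefficient of degree i + j of a * b, every term but a_i b_j lies in P. *)
Lemma coefM_notin A P a b i j : is_subring A -> is_prime_ideal A P ->
  coefs_in A a -> coefs_in A b -> ~ P a`_i -> ~ P b`_j ->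
  (forall k, (i < k)%N -> P a`_k) -> (forall k, (j < k)%N -> P b`_k) ->
  ~ P (a * b)`_(i + j).
Proof.
move=> HA HP Aa Ab nai nbj Pa Pb; have HPm := prime_module HP.
pose i0 : 'I_(i + j).+1 := Ordinal (leq_addr j i : (i < (i + j).+1)%N).
set rest := \sum_(k < (i + j).+1 | k != i0) a`_k * b`_(i + j - k).
have Prest : P rest.
  have [P0 [PD _]] := HPm; apply: (big_ind P) => // k.
  rewrite -val_eqE /= neq_ltn => /orP[] Hk.
    by apply: moduleMl HPm (Aa _) (Pb _ _); move: (ltn_ord k) Hk; clear; lia.
  by apply: moduleMr HPm (Ab _) (Pa _ Hk).
rewrite coefM (bigD1 i0) //= addKn -/rest => Pab.
have : P (a`_i * b`_j) by rewrite -(addrK rest (_ * _)); apply: moduleB HA HPm Pab Prest.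
by case/(primeM HP (Aa _) (Ab _)).
Qed.

Lemma prime_coefs_inM A P a b : is_subring A -> is_prime_ideal A P ->
  coefs_in A a -> coefs_in A b -> coefs_in P (a * b) -> coefs_in P a \/ coefs_in P b.
Proof.
move=> HA HP Aa Ab Pab.
have [|nPa] := pselect (coefs_in P a); first by left.
have [|nPb] := pselect (coefs_in P b); first by right.
have [i [nai Pa]] := last_coef_notin (prime0 HP) nPa.
have [j [nbj Pb]] := last_coef_notin (prime0 HP) nPb.
by case: (coefM_notin HA HP Aa Ab nai nbj Pa Pb); apply: Pab.
Qed.

Lemma prime_coef_notinM A P a b : is_subring A -> is_prime_ideal A P ->
  coefs_in A a -> coefs_in A b -> (exists i, ~ P a`_i) -> (exists i, ~ P b`_i) ->
  exists i, ~ P (a * b)`_i.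
Proof.
move=> HA HP Aa Ab [i nai] [j nbj]; apply: contrapT => nab.
have Pab : coefs_in P (a * b) by move=> k; apply: contrapT => nk; apply: nab; exists k.
by case: (prime_coefs_inM HA HP Aa Ab Pab) => [/(_ i)|/(_ j)].
Qed.

End GaussLemma.

Section PolynomialExtension.
Variable L : fieldType.
Implicit Types (R P : set L) (Q : set {fraction {poly L}}) (p q : {poly L}).

Lemma fracX_inj : injective (@fracX L).
Proof. by move=> p q /eqP; rewrite tofrac_eq => /eqP. Qed.
Lemma fracX0 : fracX (0 : {poly L}) = 0. Proof. exact: tofrac0. Qed.
Lemma fracX1 : fracX (1 : {poly L}) = 1. Proof. exact: tofrac1. Qed.
Lemma fracXD p q : fracX (p + q) = fracX p + fracX q. Proof. exact: tofracD. Qed.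
Lemma fracXB p q : fracX (p - q) = fracX p - fracX q. Proof. exact: tofracB. Qed.
Lemma fracXM p q : fracX (p * q) = fracX p * fracX q. Proof. exact: tofracM. Qed.
Lemma fracXXn p n : fracX (p ^+ n) = fracX p ^+ n. Proof. exact: tofracXn. Qed.
Lemma fracX_eq0 p : (fracX p == 0) = (p == 0). Proof. exact: tofrac_eq0. Qed.

Lemma ringXP R p : ringX R (fracX p) <-> coefs_in R p.
Proof. by split=> [[q [Rq /fracX_inj ->]] //|Rp]; exists p. Qed.

Lemma ringX_subring R : is_subring R -> is_subring (ringX R).
Proof.
move=> HR; have HRm := subring_module HR.
split; first by rewrite -fracX0; apply/ringXP; apply: coefs_in0 HRm.
split; first by rewrite -fracX1; apply/ringXP; apply: coefs_in1.
split=> _ _ [p [Rp ->]] [q [Rq ->]].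
  by rewrite -fracXB; apply/ringXP; apply: coefs_inB HR HRm Rp Rq.
by rewrite -fracXM; apply/ringXP; apply: coefs_inM.
Qed.

Lemma ringXC R c : is_subring R -> R c -> ringX R (fracX c%:P).
Proof. by move=> HR Rc; apply/ringXP; apply: coefs_inC => //; apply: subring0. Qed.

Lemma ringXXn R c n : is_subring R -> R c -> ringX R (fracX (c%:P ^+ n)).
Proof. by move=> HR Rc; rewrite fracXXn; apply/(subringX _ (ringX_subring HR))/ringXC. Qed.

Lemma fracXC_neq0 (x : L) : x != 0 -> fracX x%:P != 0.
Proof. by rewrite fracX_eq0 polyC_eq0. Qed.

Lemma extXP P p : extX P (fracX p) <-> coefs_in P p.
Proof. by split=> [[q [Pq /fracX_inj ->]] //|Pp]; exists p. Qed.

Lemma extXC P c : P 0 -> P c -> extX P (fracX c%:P).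
Proof. by move=> P0 Pc; apply/extXP; apply: coefs_inC. Qed.

Lemma extX_prime R P : is_subring R -> is_prime_ideal R P ->
  is_prime_ideal (ringX R) (extX P).
Proof.
move=> HR HP; have HPm := prime_module HP.
split; first by move=> _ [p [Pp ->]]; apply/ringXP; apply: coefs_inS (prime_sub HP) Pp.
split; first by rewrite -fracX0; apply/extXP; apply: coefs_in0 HPm.
split=> [_ _ [p [Pp ->]] [q [Pq ->]]|]; first by rewrite -fracXD; apply/extXP/(coefs_inD HPm).
split=> [_ _ [p [Rp ->]] [q [Pq ->]]|]; first by rewrite -fracXM; apply/extXP/(coefs_inMl HPm).
split; first by rewrite -fracX1 => /extXP /(_ 0%N); rewrite coef1; apply: prime1 HP.
move=> _ _ [p [Rp ->]] [q [Rq ->]]; rewrite -fracXM => /extXP Ppq.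
by case: (prime_coefs_inM HR HP Rp Rq Ppq) => ?; [left|right]; apply/extXP.
Qed.

Lemma contr_extX R P : P `<=` R -> P 0 -> contr R (extX P) = P.
Proof.
move=> PR P0; apply/seteqP; split=> c; first by case=> _ /extXP /(_ 0%N); rewrite coefC.
by move=> Pc; split; [apply: PR|apply: extXC].
Qed.

Definition PX R P : set {fraction {poly L}} :=
  [set z | exists p, coefs_in R p /\ P p`_0 /\ z = fracX p].

Lemma PXP R P p : PX R P (fracX p) <-> coefs_in R p /\ P p`_0.
Proof. by split=> [[q [Rq [Pq0 /fracX_inj ->]]] //|[Rp Pp0]]; exists p. Qed.

Lemma PX_X R P : is_subring R -> P 0 -> PX R P (fracX 'X).
Proof. by move=> HR P0; apply/PXP; split; [apply: coefs_inX|rewrite coefX]. Qed.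

Lemma PX_prime R P : is_subring R -> is_prime_ideal R P ->
  is_prime_ideal (ringX R) (PX R P).
Proof.
move=> HR HP; have [P0 [PD PM]] := prime_module HP; have HRm := subring_module HR.
split; first by move=> _ [p [Rp [_ ->]]]; apply/ringXP.
split; first by rewrite -fracX0; apply/PXP; split; [apply: coefs_in0 HRm|rewrite coef0].
split.
  move=> _ _ [p [Rp [Pp0 ->]]] [q [Rq [Pq0 ->]]]; rewrite -fracXD; apply/PXP.
  by split; [apply: coefs_inD HRm Rp Rq|rewrite coefD; apply: PD].
split.
  move=> _ _ [p [Rp ->]] [q [Rq [Pq0 ->]]]; rewrite -fracXM; apply/PXP.
  by split; [apply: coefs_inM|rewrite coef0M; apply: PM].
split; first by rewrite -fracX1 => /PXP [_]; rewrite coef1; apply: prime1 HP.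
move=> _ _ [p [Rp ->]] [q [Rq ->]]; rewrite -fracXM => /PXP [_].
rewrite coef0M => /(primeM HP (Rp _) (Rq _)).
by case=> ?; [left|right]; apply/PXP.
Qed.

Lemma contr_PX R P : is_subring R -> P `<=` R -> contr R (PX R P) = P.
Proof.
move=> HR PR; apply/seteqP; split=> c; first by case=> _ /PXP [_]; rewrite coefC.
move=> Pc; split; first exact: PR.
by apply/PXP; split; [apply: coefs_inC (subring0 HR) (PR _ Pc)|rewrite coefC].
Qed.

Lemma extX_sub_PX R P : P `<=` R -> extX P `<=` PX R P.
Proof. by move=> PR _ [p [Pp ->]]; apply/PXP; split; [apply: coefs_inS PR Pp|apply: Pp]. Qed.

Lemma contr_module R Q : is_subring R -> is_module (ringX R) Q -> is_module R (contr R Q).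
Proof.
move=> HR [Q0 [QD QM]]; split; first by split; [apply: subring0|rewrite fracX0].
split=> [x y [Rx Qx] [Ry Qy]|r x Rr [Rx Qx]]; split.
- exact: subringD.
- by rewrite polyCD fracXD; apply: QD.
- exact: subringM.
- by rewrite polyCM fracXM; apply: QM => //; apply: ringXC.
Qed.

Lemma contr_prime R Q : is_subring R -> is_prime_ideal (ringX R) Q ->
  is_prime_ideal R (contr R Q).
Proof.
move=> HR HQ; have [C0 [CD CM]] := contr_module HR (prime_module HQ).
split; first by move=> x [].
do 4!split=> //; first by case=> _; rewrite fracX1; apply: prime1 HQ.
move=> a b Ra Rb [_]; rewrite polyCM fracXM.
by case/(primeM HQ (ringXC HR Ra) (ringXC HR Rb)) => ?; [left|right].
Qed.

Lemma contrS R Q Q' : Q `<=` Q' -> contr R Q `<=` contr R Q'.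
Proof. by move=> QQ' c [Rc Qc]; split=> //; apply: QQ'. Qed.

Lemma extX_sub R P Q : is_subring R -> is_module (ringX R) Q ->
  P `<=` contr R Q -> extX P `<=` Q.
Proof.
move=> HR HQ PQ _ [p [Pp ->]]; have [Q0 [QD QM]] := HQ.
rewrite -[p]coefK poly_def /fracX rmorph_sum; apply: (big_ind Q) => // i _.
rewrite -mul_polyC rmorphM mulrC; apply: QM; first by apply/ringXP; apply: coefs_inXn.
by case: (PQ _ (Pp i)).
Qed.

End PolynomialExtension.

Section Span.
Variable F : fieldType.
Variable A : set F.
Hypothesis HA : is_subring A.
Implicit Types (J : set F) (s : seq F).

Lemma span_mem s i : (i < size s)%N -> Defs.span A s s`_i.
Proof.
move=> Hi; exists (fun k => (k == i)%:R); split.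
  by move=> k; case: (k == i); [apply: subring1|apply: subring0].
rewrite (bigD1 (Ordinal Hi)) //= eqxx mul1r big1 ?addr0 // => k.
by rewrite -val_eqE /= => /negbTE ->; rewrite mul0r.
Qed.

Lemma span_sub J s : is_module A J -> (forall i, (i < size s)%N -> J s`_i) ->
  Defs.span A s `<=` J.
Proof.
move=> [J0 [JD JM]] Js _ [c [Ac ->]].
by apply: (big_ind J) => // i _; apply: JM => //; apply: Js.
Qed.

Lemma span_module s : is_module A (Defs.span A s).
Proof.
split.
  exists (fun _ => 0); split; first by move=> _; apply: subring0.
  by rewrite big1 // => i _; rewrite mul0r.
split.
  move=> _ _ [c1 [Ac1 ->]] [c2 [Ac2 ->]]; exists (fun k => c1 k + c2 k).
  split; first by move=> k; apply: subringD.
  by rewrite -big_split /=; apply: eq_bigr => i _; rewrite mulrDl.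
move=> r _ Ar [c [Ac ->]]; exists (fun k => r * c k).
split; first by move=> k; apply: subringM.
by rewrite mulr_sumr; apply: eq_bigr => i _; rewrite mulrA.
Qed.

Lemma span_frac_module s x : Defs.span A s x -> x != 0 ->
  is_frac_module A (Defs.span A s).
Proof. by move=> Sx nx; have [S0 [SD SM]] := span_module s; do 3!split=> //; exists x. Qed.

Lemma span_catl s1 s2 : Defs.span A s1 `<=` Defs.span A (s1 ++ s2).
Proof.
apply: span_sub; first exact: span_module.
move=> i Hi; have -> : s1`_i = (s1 ++ s2)`_i by rewrite nth_cat Hi.
by apply: span_mem; rewrite size_cat ltn_addr.
Qed.

Lemma span_catr s1 s2 : Defs.span A s2 `<=` Defs.span A (s1 ++ s2).
Proof.
apply: span_sub; first exact: span_module.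
move=> i Hi; have -> : s2`_i = (s1 ++ s2)`_(size s1 + i).
  by rewrite nth_cat ltnNge leq_addr /= addKn.
by apply: span_mem; rewrite size_cat ltn_add2l.
Qed.

Lemma span_cat_sub J s1 s2 : is_module A J ->
  Defs.span A s1 `<=` J -> Defs.span A s2 `<=` J -> Defs.span A (s1 ++ s2) `<=` J.
Proof.
move=> HJ S1J S2J; apply: span_sub => // i; rewrite size_cat nth_cat.
case: ifP => [Hi _|/negbT]; first exact/S1J/span_mem.
by rewrite -leqNgt => Hi Hi2; apply/S2J/span_mem; rewrite ltn_subLR.
Qed.

Lemma span_seq1 x : Defs.span A [:: x] x.
Proof. exact: (@span_mem [:: x] 0). Qed.

Lemma span_scale b s :
  Defs.span A (map (fun y => b * y) s) = scale_set b (Defs.span A s).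
Proof.
rewrite /Defs.span size_map; apply/seteqP; split=> z.
  move=> [c [Ac ->]]; exists (\sum_(i < size s) c i * s`_i); first by exists c.
  by rewrite mulr_sumr; apply: eq_bigr => i _; rewrite (nth_map 0) // mulrCA.
move=> [y [c [Ac ->]] <-]; exists c; split=> //.
by rewrite mulr_sumr; apply: eq_bigr => i _; rewrite (nth_map 0) // mulrCA.
Qed.

End Span.

(* a semistar operation without the scaling axiom; [stilde] and [starX] are of this kind *)
Definition is_closure (F : fieldType) (R : set F) (st : set F -> set F) :=
  is_subring R /\ forall E, is_frac_module R E ->
     [/\ is_frac_module R (st E), E `<=` st E, st (st E) `<=` st E &
     (forall N, is_frac_module R N -> E `<=` N -> st E `<=` st N)].

Section FiniteType.
Variable L : fieldType.
Variable D : set L.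
Variable st : set L -> set L.
Hypothesis HD : is_subring D.
Hypothesis Hst : is_semistar D st.
Implicit Types (E M N : set L) (s t : seq L).

Lemma semistar_frac_module E : is_frac_module D E -> is_frac_module D (st E).
Proof. by move=> HE; case: (Hst HE HE). Qed.
Lemma semistar_ext E : is_frac_module D E -> E `<=` st E.
Proof. by move=> HE; case: (Hst HE HE). Qed.
Lemma semistar_idem E : is_frac_module D E -> st (st E) = st E.
Proof. by move=> HE; case: (Hst HE HE). Qed.
Lemma semistar_mono E N : is_frac_module D E -> is_frac_module D N ->
  E `<=` N -> st E `<=` st N.
Proof. by move=> HE HN; case: (Hst HE HN). Qed.
Lemma semistar_scale x E : is_frac_module D E -> x != 0 ->
  st (scale_set x E) = scale_set x (st E).
Proof. by move=> HE; case: (Hst HE HE) => _ Hscale _ _ _; apply: Hscale. Qed.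

Lemma span_seq1_sub E x : is_frac_module D E -> E x -> x != 0 ->
  is_frac_module D (Defs.span D [:: x]) /\ Defs.span D [:: x] `<=` E.
Proof.
move=> HE Ex nx; split; first by apply: (span_frac_module HD (span_seq1 HD x)).
by apply: span_sub (frac_module_module HE) _ => -[].
Qed.

Lemma span_cat_frac_module s1 s2 : is_frac_module D (Defs.span D s1) ->
  is_frac_module D (Defs.span D (s1 ++ s2)).
Proof.
move=> /frac_module_nz [y [Sy ny]].
by apply: (span_frac_module HD (span_catl HD s2 Sy)).
Qed.

Lemma starf_mono E N : E `<=` N -> starf D st E `<=` starf D st N.
Proof. by move=> EN z [s [Fs [SE Sz]]]; exists s; do 2!split=> //; apply: subset_trans EN. Qed.

Lemma starf_frac_module E : is_frac_module D E -> is_frac_module D (starf D st E).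
Proof.
move=> HE; have HEm := frac_module_module HE; have [x [Ex nx]] := frac_module_nz HE.
have [Fx SxE] := span_seq1_sub HE Ex nx.
have [St0 [StD StM]] := frac_module_module (semistar_frac_module Fx).
split; first by exists [:: x].
split.
  move=> z1 z2 [s1 [F1 [S1 Z1]]] [s2 [F2 [S2 Z2]]].
  have F12 := span_cat_frac_module s2 F1.
  exists (s1 ++ s2); do 2!split=> //; first exact: span_cat_sub.
  have [_ [StD12 _]] := frac_module_module (semistar_frac_module F12).
  apply: StD12; first exact: semistar_mono F1 F12 (span_catl HD s2) _ Z1.
  by apply: semistar_mono F2 F12 _ _ Z2; apply: span_catr.
split.
  move=> r z Dr [s [Fs [SE Sz]]]; exists s; do 2!split=> //.
  by apply: moduleMl (frac_module_module (semistar_frac_module Fs)) Dr Sz.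
exists x; split=> //; exists [:: x]; do 2!split=> //.
exact: semistar_ext Fx _ (span_seq1 HD x).
Qed.

Lemma starf_ext E : is_frac_module D E -> E `<=` starf D st E.
Proof.
move=> HE y Ey; have [->|ny] := eqVneq y 0; first by case: (starf_frac_module HE).
have [Fy SyE] := span_seq1_sub HE Ey ny.
by exists [:: y]; do 2!split=> //; apply: semistar_ext Fy _ (span_seq1 HD y).
Qed.

Lemma starf_seq_common E s : is_frac_module D E ->
  (forall i, (i < size s)%N -> starf D st E s`_i) ->
  exists t, [/\ is_frac_module D (Defs.span D t), Defs.span D t `<=` E &
     forall i, (i < size s)%N -> st (Defs.span D t) s`_i].
Proof.
move=> HE; elim: s => [|a s IH] Es.
  have [x [Ex nx]] := frac_module_nz HE; have [Fx SxE] := span_seq1_sub HE Ex nx.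
  by exists [:: x].
have [t1 [F1 S1 H1]] := IH (fun i => Es i.+1).
have [t0 [F0 [S0 H0]]] := Es 0%N isT.
have F01 := span_cat_frac_module t1 F0.
exists (t0 ++ t1); split=> //; first exact: span_cat_sub (frac_module_module HE) _ _.
case=> [_|i Hi] /=; first exact: semistar_mono F0 F01 (span_catl HD t1) _ H0.
by apply: semistar_mono F1 F01 _ _ (H1 _ Hi); apply: span_catr.
Qed.

Lemma starf_idem E : is_frac_module D E -> starf D st (starf D st E) `<=` starf D st E.
Proof.
move=> HE z [s [Fs [SE Sz]]].
have [t [Ft St Ht]] := starf_seq_common HE (fun i Hi => SE _ (span_mem HD Hi)).
exists t; do 2!split=> //; rewrite -(semistar_idem Ft).
apply: semistar_mono Fs (semistar_frac_module Ft) _ _ Sz.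
exact: span_sub (frac_module_module (semistar_frac_module Ft)) Ht.
Qed.

Lemma starf_scale E N b z : is_frac_module D E -> b != 0 ->
  scale_set b E `<=` N -> starf D st E z -> starf D st N (b * z).
Proof.
move=> HE nb bEN [s [Fs [SE Sz]]].
have [y [Sy ny]] := frac_module_nz Fs.
have bSy : Defs.span D (map (fun y => b * y) s) (b * y) by rewrite span_scale; exists y.
exists (map (fun y => b * y) s); split.
  exact (span_frac_module HD bSy (mulf_neq0 nb ny)).
rewrite span_scale semistar_scale //; split; last by exists z.
by move=> _ [w Sw <-]; apply: bEN; exists w => //; apply: SE.
Qed.

Lemma quasi_ideal_starf_cap N : is_frac_module D N -> (exists x, N x /\ D x /\ x != 0) ->
  quasi_ideal D (starf D st) (starf D st N `&` D).
Proof.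
move=> HN [x [Nx [Dx nx]]]; have [S0 [SD SM]] := frac_module_module (starf_frac_module HN).
have HJ : is_frac_module D (starf D st N `&` D).
  split; first by split=> //; apply: subring0.
  split; first by move=> y z [Sy Dy] [Sz Dz]; split; [apply: SD|apply: subringD].
  split; first by move=> r y Dr [Sy Dy]; split; [apply: SM|apply: subringM].
  by exists x; do 2!split=> //; apply: starf_ext.
split; first by split=> // y [].
apply/seteqP; split=> [y [Sy Dy]|y Jy]; last by split; [apply: starf_ext|case: Jy].
by split=> //; apply: (starf_idem HN); apply: starf_mono Sy => t [].
Qed.

Definition add_principal (M : set L) (a : L) : set L :=
  [set z | exists m r, M m /\ D r /\ z = m + a * r].

Section AddPrincipal.
Variables (M : set L) (a : L).
Hypothesis HM : is_module D M.

Lemma add_principal_r : add_principal M a a.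
Proof.
by exists 0, 1; split; [apply: (proj1 HM)|split; [apply: subring1|rewrite mulr1 add0r]].
Qed.

Lemma add_principal_l : M `<=` add_principal M a.
Proof.
by move=> m Mm; exists m, 0; split=> //; split; [apply: subring0|rewrite mulr0 addr0].
Qed.

Lemma add_principal_frac_module : a != 0 -> is_frac_module D (add_principal M a).
Proof.
have [M0 [MD MM]] := HM; move=> na; split; first exact: add_principal_l.
split.
  move=> _ _ [m1 [r1 [Mm1 [Dr1 ->]]]] [m2 [r2 [Mm2 [Dr2 ->]]]].
  by exists (m1 + m2), (r1 + r2); split; [apply: MD|split; [apply: subringD|ring]].
split; last by exists a; split=> //; apply: add_principal_r.
move=> r _ Dr [m [r1 [Mm [Dr1 ->]]]].
by exists (r * m), (r * r1); split; [apply: MM|split; [apply: subringM|ring]].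
Qed.

End AddPrincipal.

(* If ab is in M but a is not, then ((M + aD)^{star_f} \cap D) = D by maximality, so
   1 is in (M + aD)^{star_f} and b is in (bM + abD)^{star_f}, which is inside M^{star_f}. *)
Lemma quasi_max_prime M : quasi_max D (starf D st) M -> is_prime_ideal D M.
Proof.
move=> [[[HM MD] Mq] [MneD Mmax]]; have HMm := frac_module_module HM.
have [M0 [MDD MM]] := HMm.
have nM1 : ~ M 1.
  move=> M1; apply: MneD; apply/seteqP; split=> // r Dr.
  by rewrite -[r]mulr1; apply: MM.
do 5!split=> //; move=> a b Da Db Mab.
have [Ma|nMa] := pselect (M a); [by left|right].
have [->|nb] := eqVneq b 0; first exact: M0.
have na : a != 0 by apply: contra_notN nMa => /eqP ->.
have HN := add_principal_frac_module HMm na.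
have Na := add_principal_r a HMm.
have N1 : starf D st (add_principal M a) 1.
  have Jq := quasi_ideal_starf_cap HN (ex_intro _ a (conj Na (conj Da na))).
  suff JD : starf D st (add_principal M a) `&` D = D.
    by have [] : (starf D st (add_principal M a) `&` D) 1 by rewrite JD; apply: subring1.
  apply: contrapT => JneD; apply: nMa; rewrite -(Mmax _ Jq JneD).
    by split=> //; apply: starf_ext HN _ Na.
  by move=> m Mm; split; [apply/(starf_ext HN)/add_principal_l|apply: MD].
rewrite -Mq; split=> //; rewrite -[b]mulr1; apply: starf_scale HN nb _ N1.
move=> _ [_ [m [r [Mm [Dr ->]]]] <-]; rewrite mulrDr; apply: MDD; first exact: MM.
have -> : b * (a * r) = r * (a * b) by ring.
exact: MM.
Qed.

Lemma stilde_closure : is_closure D (stilde D st).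
Proof.
split=> // E HE; have HEm := frac_module_module HE; have [E0 [ED EM]] := HEm.
have Eext : E `<=` stilde D st E.
  move=> x Ex P /quasi_max_prime HP; exists x, 1; rewrite divr1.
  by split=> //; split; [apply: subring1|split=> //; apply: prime1 HP].
split=> //.
- split; first exact: Eext.
  split.
    move=> z1 z2 H1 H2 P HPm; have HP := quasi_max_prime HPm.
    have [x1 [s1 [Ex1 [Ds1 [Ps1 ->]]]]] := H1 P HPm.
    have [x2 [s2 [Ex2 [Ds2 [Ps2 ->]]]]] := H2 P HPm.
    exists (x1 * s2 + x2 * s1), (s1 * s2); split; first by apply: ED; apply: moduleMr HEm _ _.
    split; first exact: subringM.
    split; first by case/(primeM HP Ds1 Ds2).
    by rewrite addf_div ?(prime_notin_neq0 HP).
  split.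
    move=> r z Dr Hz P HPm; have [x [s [Ex [Ds [Ps ->]]]]] := Hz P HPm.
    by exists (r * x), s; rewrite mulrA; split; [apply: EM|].
  by have [x [Ex nx]] := frac_module_nz HE; exists x; split=> //; apply: Eext.
- move=> z Hz P HPm; have HP := quasi_max_prime HPm.
  have [y [s [Hy [Ds [Ps ->]]]]] := Hz P HPm.
  have [x [t [Ex [Dt [Pt ->]]]]] := Hy P HPm.
  exists x, (t * s); split=> //; split; first exact: subringM.
  by split; [case/(primeM HP Dt Ds)|rewrite invfM mulrA].
- move=> N _ EN z Hz P HPm; have [x [s [Ex [Ds [Ps ->]]]]] := Hz P HPm.
  by exists x, s; split=> //; apply: EN.
Qed.

End FiniteType.

Lemma quasi_prime_prime (F : fieldType) (R P : set F) st :
  quasi_prime R st P -> is_prime_ideal R P.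
Proof. by case. Qed.

Lemma quasi_prime_nz (F : fieldType) (R P : set F) st :
  quasi_prime R st P -> exists x, P x /\ x != 0.
Proof. by case=> [[[[_ [_ [_ Pnz]]] _] _] _]. Qed.

Lemma quasi_prime_closed (F : fieldType) (R P : set F) st :
  quasi_prime R st P -> st P `&` R = P.
Proof. by case=> [[_ ->]]. Qed.

Section StarX.
Variable L : fieldType.
Variable R : set L.
Variable st : set L -> set L.
Hypothesis HR : is_subring R.
Implicit Types (E Q : set {fraction {poly L}}) (s : {poly {fraction {poly L}}}).

Lemma Smult1 : Smult R st 1.
Proof.
split; first exact: coefs_in1 (ringX_subring HR).
by move=> Q [HQ _]; exists 0%N; rewrite coef1; apply: prime1 HQ.
Qed.

Lemma SmultM s1 s2 : Smult R st s1 -> Smult R st s2 -> Smult R st (s1 * s2).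
Proof.
move=> [R1 T1] [R2 T2]; have HX := ringX_subring HR.
split; first exact: coefs_inM.
by move=> Q HT; apply: prime_coef_notinM HX (proj1 HT) R1 R2 (T1 _ HT) (T2 _ HT).
Qed.

Lemma starX_ext E : E 0 -> E `<=` starX R st E.
Proof.
move=> E0 z Ez; exists z%:P, 1; rewrite mulr1.
by split; [apply: coefs_inC|split; [apply: Smult1|]].
Qed.

(* clearing the denominators of the coefficients one at a time *)
Lemma starX_coefs_denom E f : is_module (ringX R) E ->
  coefs_in (starX R st E) f -> exists s, Smult R st s /\ coefs_in E (f * s).
Proof.
move=> HE; have HX := ringX_subring HR.
elim/poly_ind: f => [|p c IH] Ef.
  by exists 1; split; [apply: Smult1|rewrite mul0r; apply: coefs_in0 HE].
have Ep : coefs_in (starX R st E) p.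
  by move=> i; have := Ef i.+1; rewrite coefD coefMX coefC addr0.
have [g [s2 [Eg [S2 Eg2]]]] : starX R st E c.
  by have := Ef 0%N; rewrite coefD coefMX coefC add0r.
have [s1 [S1 Es1]] := IH Ep.
exists (s1 * s2); split; first exact: SmultM.
rewrite mulrDl_ACA Eg2; apply: (coefs_inD HE); apply: (coefs_inMr HE) => //.
  by apply: coefs_inM => //; [apply: coefs_inX|case: S2].
by case: S1.
Qed.

Lemma starX_closure : is_closure (ringX R) (starX R st).
Proof.
have HX := ringX_subring HR; split; first exact: HX.
move=> E HE; have HEm := frac_module_module HE.
have [E0 [ED EM]] := HEm; have Eext := starX_ext E0.
split; [|exact: Eext| |].
- split; first exact: Eext.
  split.
    move=> z1 z2 [f1 [s1 [E1 [S1 Ef1]]]] [f2 [s2 [E2 [S2 Ef2]]]].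
    exists (f1 * s2 + f2 * s1), (s1 * s2); split.
      by apply: (coefs_inD HEm); apply: (coefs_inMr HEm) => //; [case: S2|case: S1].
    split; first exact: SmultM.
    by rewrite -Ef1 -Ef2 polyCD mulrDl_AC.
  split.
    move=> r z Rr [f [s [Ef [Ss Ezf]]]]; exists (r%:P * f), s; split.
      by apply: (coefs_inMl HEm) Ef; apply: coefs_inC (subring0 HX) Rr.
    by split=> //; rewrite -Ezf polyCM -mulrA.
  by have [x [Ex nx]] := frac_module_nz HE; exists x; split=> //; apply: Eext.
- move=> z [f [s [Ef [Ss Ezf]]]].
  have [s' [S' Efs']] := starX_coefs_denom HEm Ef.
  exists (f * s'), (s * s'); split=> //; split; first exact: SmultM.
  by rewrite mulrA Ezf.
- by move=> N _ EN z [f [s [Ef Sf]]]; exists f, s; split=> // i; apply: EN.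
Qed.

Lemma Theta_starX_closed Q : Theta R st Q -> starX R st Q `&` ringX R `<=` Q.
Proof.
move=> HT z [[f [s [Qf [[Rs Ts] Ezf]]]] Rz].
have [i nQs] := Ts Q HT; have := Qf i; rewrite -Ezf coefCM.
by case/(primeM (proj1 HT) Rz (Rs i)).
Qed.

Lemma Theta_quasi_prime Q : Theta R st Q -> (exists x, Q x /\ x != 0) ->
  quasi_prime (ringX R) (starX R st) Q.
Proof.
move=> HT Qnz; have HQ := proj1 HT; have [Q0 [QD QM]] := prime_module HQ.
split=> //; split; first by split; [do 3!split=> //|apply: prime_sub HQ].
apply/seteqP; split; first exact: Theta_starX_closed.
by move=> z Qz; split; [apply: (starX_ext Q0 Qz)|apply: (prime_sub HQ)].
Qed.

End StarX.

Section QuasiPrimesStarX.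
Variable L : fieldType.
Variable R : set L.
Variable st : set L -> set L.
Hypothesis Hcl : is_closure R st.
Implicit Types (E P : set L) (Q : set {fraction {poly L}}) (p : seq L).

Let HR : is_subring R := proj1 Hcl.

Lemma closure_mono E N : is_frac_module R E -> is_frac_module R N ->
  E `<=` N -> st E `<=` st N.
Proof. by move=> HE; have [_ _ _] := proj2 Hcl E HE; apply. Qed.

Lemma starf_sub_closure E : E `<=` R -> starf R st E `<=` st R.
Proof.
move=> ER z [s [Fs [SE Sz]]].
by apply: closure_mono Fs (subring_frac_module HR) (subset_trans SE ER) _ Sz.
Qed.

Lemma closure_span_unit p : is_frac_module R (Defs.span R p) ->
  st (Defs.span R p) 1 -> st R `<=` st (Defs.span R p).
Proof.
move=> Fp Sp1; have [Fst _ Sidem _] := proj2 Hcl _ Fp.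
have RS : R `<=` st (Defs.span R p).
  by move=> r Rr; rewrite -[r]mulr1; apply: moduleMl (frac_module_module Fst) Rr Sp1.
by move=> z Rz; apply: Sidem; apply: (closure_mono (subring_frac_module HR) Fst RS).
Qed.

Lemma starf_quasi_prime_proper P : quasi_prime R st P -> starf R st P `<` st R.
Proof.
move=> HPq; have HP := quasi_prime_prime HPq; split.
  exact: starf_sub_closure (prime_sub HP).
move=> Rsub; have [_ Rext _ _] := proj2 Hcl R (subring_frac_module HR).
have [s [Fs [SP Ss1]]] := Rsub 1 (Rext 1 (subring1 HR)).
apply: (prime1 HP); rewrite -(quasi_prime_closed HPq); split; last exact: subring1.
by apply: closure_mono Fs (proj1 (proj1 (proj1 HPq))) SP _ Ss1.
Qed.

(* No prime in Theta contains all the coefficients, which generate I with 1 \in I^star. *)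
Lemma span_poly_Smult p : is_frac_module R (Defs.span R p) -> st (Defs.span R p) 1 ->
  (forall i, (i < size p)%N -> R p`_i) ->
  Smult R st (\poly_(i < size p) fracX (p`_i)%:P).
Proof.
move=> Fp Sp1 Rp; split.
  apply: coefs_in_poly; first exact: subring0 (ringX_subring HR).
  by move=> i Hi; apply: ringXC HR (Rp i Hi).
move=> Q [HQ HT]; apply: contrapT => Qall.
have pQ : Defs.span R p `<=` contr R Q.
  apply: span_sub; first exact: contr_module HR (prime_module HQ).
  move=> i Hi; split; first exact: Rp.
  by apply: contrapT => nQ; apply: Qall; exists i; rewrite coef_poly Hi.
case: HT => [Q0|[_ nRsub]].
  have [y [Py ny]] := frac_module_nz Fp.
  by move: (pQ _ Py); rewrite Q0 => /= y0; rewrite y0 eqxx in ny.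
apply: nRsub => z /(closure_span_unit Fp Sp1) Sz; exists p; split=> //.
Qed.

(* If the contraction I of Q is nonzero and 1 \in I^{star_f}, a finite generating family
   of I gives s \in S with coefficients in Q, so 1 = s / s \in Q^{star[X]} \cap R[X] = Q. *)
Lemma quasi_prime_Theta Q : quasi_prime (ringX R) (starX R st) Q -> Theta R st Q.
Proof.
move=> HQq; have HQ := quasi_prime_prime HQq; split=> //.
have [C0|Cnz] := pselect (contr R Q = [set 0]); [by left|right].
have CR : contr R Q `<=` R by move=> y [].
split; first exact: starf_sub_closure.
move=> Rsub; have [_ Rext _ _] := proj2 Hcl R (subring_frac_module HR).
have [p [Fp [pQ Sp1]]] := Rsub 1 (Rext 1 (subring1 HR)).
have Qp i : (i < size p)%N -> contr R Q p`_i by move=> Hi; apply/pQ/span_mem.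
pose s := \poly_(i < size p) fracX (p`_i)%:P.
have Ss : Smult R st s by apply: span_poly_Smult => // i /Qp [].
have Q1 : starX R st Q 1.
  exists s, s; split; last by split=> //; rewrite mul1r.
  by move=> i; rewrite coef_poly; case: ifP => [/Qp []|_]; [|apply: prime0 HQ].
apply: (prime1 HQ); rewrite -(quasi_prime_closed HQq).
by split=> //; apply: subring1 (ringX_subring HR).
Qed.

Lemma sub_quasi_prime_starX Q Q' : is_prime_ideal (ringX R) Q ->
  (exists x, Q x /\ x != 0) -> quasi_prime (ringX R) (starX R st) Q' ->
  Q `<=` Q' -> quasi_prime (ringX R) (starX R st) Q.
Proof.
move=> HQ Qnz HQ'q QQ'; apply: (Theta_quasi_prime HR) => //; split=> //.
have CQQ' := contrS (R := R) QQ'.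
case: (quasi_prime_Theta HQ'q) => _ [C0|[Csub nRsub]].
  left; apply/seteqP; split=> [x /CQQ'|x ->]; first by rewrite C0.
  by split; [apply: subring0|rewrite fracX0; apply: prime0 HQ].
right; split; first exact: subset_trans (starf_mono CQQ') Csub.
by move=> Rsub; apply: nRsub; apply: subset_trans Rsub (starf_mono CQQ').
Qed.

Lemma extX_quasi_prime P : quasi_prime R st P ->
  quasi_prime (ringX R) (starX R st) (extX P).
Proof.
move=> HPq; have HP := quasi_prime_prime HPq.
apply: (Theta_quasi_prime HR); first split.
- exact: extX_prime HR HP.
- right; rewrite contr_extX;
    [exact: starf_quasi_prime_proper|exact: prime_sub HP|exact: prime0 HP].
have [x [Px nx]] := quasi_prime_nz HPq.
by exists (fracX x%:P); split; [apply: extXC (prime0 HP) Px|apply: fracXC_neq0].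
Qed.

Lemma PX_quasi_prime P : quasi_prime R st P ->
  quasi_prime (ringX R) (starX R st) (PX R P).
Proof.
move=> HPq; have HP := quasi_prime_prime HPq.
apply: (Theta_quasi_prime HR); first split.
- exact: PX_prime HR HP.
- right; rewrite contr_PX //; [exact: starf_quasi_prime_proper|exact: prime_sub HP].
exists (fracX 'X); split; first exact: PX_X (prime0 HP).
by rewrite fracX_eq0 polyX_eq0.
Qed.

End QuasiPrimesStarX.

Lemma ex_minn_prop (Pn : nat -> Prop) :
  (exists n, Pn n) -> exists n, Pn n /\ forall m, Pn m -> (n <= m)%N.
Proof.
move=> [n0 Pn0]; have : exists n, `[< Pn n >] by exists n0; apply/asboolP.
by case/ex_minnP => n /asboolP Pnn Hmin; exists n; split=> // m /asboolP /Hmin.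
Qed.

Lemma pseudo_division_step (T : comPzRingType) (c g lg xm f h r : T) k :
  c ^+ k * (c * g - lg * xm * f) = h * f + r ->
  c ^+ k.+1 * g = (h + c ^+ k * lg * xm) * f + r.
Proof.
move=> E; have -> : c ^+ k.+1 * g = c ^+ k * (c * g - lg * xm * f) + c ^+ k * lg * xm * f.
  by rewrite exprSr; ring.
by rewrite E; ring.
Qed.

Section PseudoDivision.
Variable L : fieldType.
Variable R : set L.
Hypothesis HR : is_subring R.
Implicit Types (P : set L) (f g h r : {poly L}).

Let HRm := subring_module HR.

Lemma lead_coef_in f : coefs_in R f -> R (lead_coef f).
Proof. by move=> Rf; rewrite lead_coefE. Qed.

Lemma pseudo_divide f g : coefs_in R f -> f != 0 -> coefs_in R g ->
  exists k h r, [/\ coefs_in R h, coefs_in R r, (size r < size f)%N &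
     (lead_coef f)%:P ^+ k * g = h * f + r].
Proof.
move=> Rf nf Rg; set c := lead_coef f; have Rc : R c := lead_coef_in Rf.
have sf : (0 < size f)%N by rewrite size_poly_gt0.
have RC x : R x -> coefs_in R x%:P by apply: coefs_inC (subring0 HR).
elim: {g}(size g) {-2}g (leqnn (size g)) Rg => [|n IH] g Hn Rg.
  exists 0%N, 0, g; rewrite expr0 mul1r mul0r add0r; split=> //; first exact: coefs_in0 HRm.
  by move: Hn; rewrite leqn0 => /eqP ->.
have [Hgf|Hgf] := ltnP (size g) (size f).
  by exists 0%N, 0, g; rewrite expr0 mul1r mul0r add0r; split=> //; apply: coefs_in0 HRm.
set m := (size g - size f)%N.
set g' := c%:P * g - (lead_coef g)%:P * 'X^m * f.
have Rg' : coefs_in R g'.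
  apply: coefs_inB HR HRm _ _; first by apply: coefs_inM => //; apply: RC.
  by do 2!apply: coefs_inM => //; [apply/RC/lead_coef_in|apply: coefs_inXn].
have Hsz : (size g' <= (size g).-1)%N.
  apply/leq_sizeP => j Hj; rewrite /g' coefB coefCM -mulrA coefCM coefXnM.
  have [Hjm|Hjm] := ltnP j m; first by move: Hjm Hj Hgf sf; rewrite /m; clear; lia.
  have [Hjg|Hjg] := ltnP j (size g).
    have Ej : j = (size g).-1 by move: Hjg Hj; clear; lia.
    have Ejm : (j - m)%N = (size f).-1 by rewrite Ej /m; move: Hgf sf; clear; lia.
    by rewrite Ejm -lead_coefE Ej -lead_coefE /c mulrC subrr.
  rewrite (nth_default 0 Hjg) mulr0 (nth_default 0) ?mulr0 ?subrr // /m.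
  by move: Hjg Hgf; clear; move: (size g) (size f) => a b; lia.
have [k [h [r [Rh Rr Hrs E]]]] : exists k h r, [/\ coefs_in R h, coefs_in R r,
    (size r < size f)%N & c%:P ^+ k * g' = h * f + r].
  by apply: IH Rg'; apply: leq_trans Hsz _; move: Hn Hgf sf; clear; lia.
exists k.+1, (h + c%:P ^+ k * (lead_coef g)%:P * 'X^m), r; split=> //.
  apply: coefs_inD HRm Rh _; apply: coefs_inM => //; last exact: coefs_inXn.
  apply: coefs_inM => //; first by apply: coefs_inXp => //; apply: RC.
  exact/RC/lead_coef_in.
exact: pseudo_division_step.
Qed.

(* cut f above its top coefficient outside P *)
Lemma top_notin_trunc P f : is_prime_ideal R P -> coefs_in R f -> ~ coefs_in P f ->
  exists g, [/\ coefs_in R g, coefs_in P (f - g), ~ P (lead_coef g) & (size g <= size f)%N].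
Proof.
move=> HP Rf nPf; have [i [nPi Pi]] := last_coef_notin (prime0 HP) nPf.
have fi0 : f`_i != 0 := prime_notin_neq0 HP nPi.
exists (\poly_(k < i.+1) f`_k); split.
- by apply: coefs_in_poly (subring0 HR) _ => k _; apply: Rf.
- move=> k; rewrite coefB coef_poly; case: ifP => Hk; first by rewrite subrr; apply: prime0 HP.
  by rewrite subr0; apply: Pi; rewrite ltnNge -ltnS Hk.
- by rewrite lead_coef_poly.
- apply: leq_trans (size_poly _ _) _; rewrite ltnNge; apply/negP => Hs.
  by move: fi0; rewrite nth_default ?eqxx.
Qed.

End PseudoDivision.

Section PrimesOverExtX.
Variable L : fieldType.
Variable R : set L.
Variable P : set L.
Hypothesis HR : is_subring R.
Hypothesis HP : is_prime_ideal R P.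
Implicit Types (A B Q : set {fraction {poly L}}) (f g h r : {poly L}).

Let HX := ringX_subring HR.
Let HPm := prime_module HP.

Lemma prime_top_notin Q f : is_prime_ideal (ringX R) Q -> extX P `<=` Q ->
  coefs_in R f -> Q (fracX f) -> ~ coefs_in P f ->
  exists g, [/\ coefs_in R g, Q (fracX g), ~ P (lead_coef g) & (size g <= size f)%N].
Proof.
move=> HQ PQ Rf Qf nPf; have [g [Rg Pfg nPg sg]] := top_notin_trunc HR HP Rf nPf.
exists g; split=> //; have -> : g = f - (f - g) by rewrite opprB addrC subrK.
by rewrite fracXB; apply: moduleB HX (prime_module HQ) Qf _; apply/PQ/extXP.
Qed.

Definition minimal_over Q f := [/\ coefs_in R f, Q (fracX f), ~ P (lead_coef f) &
  forall g, coefs_in R g -> Q (fracX g) -> ~ coefs_in P g -> (size f <= size g)%N].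

Lemma exists_minimal_over Q : is_prime_ideal (ringX R) Q -> extX P `<=` Q ->
  ~ (Q `<=` extX P) -> exists f, minimal_over Q f.
Proof.
move=> HQ PQ nQP; have [z [Qz nPz]] := not_subset_ex nQP.
have [f0 [Rf0 Ez]] := prime_sub HQ Qz; rewrite Ez in Qz nPz.
have nPf0 : ~ coefs_in P f0 by move/extXP.
have [g0 [Rg0 Qg0 nPg0 _]] := prime_top_notin HQ PQ Rf0 Qz nPf0.
have [d [[f [[Rf [Qf nPf]] <-]] dmin]] := ex_minn_prop (ex_intro
  (fun n => exists g, (coefs_in R g /\ Q (fracX g) /\ ~ P (lead_coef g)) /\ size g = n)
  (size g0) (ex_intro _ g0 (conj (conj Rg0 (conj Qg0 nPg0)) erefl))).
exists f; split=> // g Rg Qg nPg.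
have [g' [Rg' Qg' nPg' sg']] := prime_top_notin HQ PQ Rg Qg nPg.
by apply: leq_trans sg'; apply: dmin; exists g'.
Qed.

Section MinimalElement.
Variables (B : set {fraction {poly L}}) (f : {poly L}).
Hypothesis HB : is_prime_ideal (ringX R) B.
Hypothesis fmin : minimal_over B f.

Let c := lead_coef f.
Let Rf : coefs_in R f. Proof. by case: fmin. Qed.
Let nPc : ~ P c. Proof. by case: fmin. Qed.
Let Rc : R c := lead_coef_in Rf.
Let fnz : f != 0. Proof. by rewrite -lead_coef_eq0; apply: prime_notin_neq0 HP nPc. Qed.

Lemma minimal_over_size : contr R B `<=` P -> (1 < size f)%N.
Proof.
move=> BP; rewrite ltnNge; apply/negP => /size1_polyC Ef; apply: nPc.
rewrite /c Ef lead_coefC; apply: BP; split; first exact: Rf.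
by rewrite -Ef; case: fmin.
Qed.

Lemma minimal_over_remainder g : coefs_in R g -> B (fracX g) -> exists k h r,
  [/\ coefs_in R h, coefs_in P r, (size r < size f)%N & c%:P ^+ k * g = h * f + r].
Proof.
move=> Rg Bg; have [k [h [r [Rh Rr Hrs E]]]] := pseudo_divide HR Rf fnz Rg.
exists k, h, r; split=> //; apply: contrapT => nPr.
have Br : B (fracX r).
  have -> : r = c%:P ^+ k * g - h * f by rewrite E addrC addKr.
  rewrite fracXB !fracXM; apply: moduleB HX (prime_module HB) _ _.
    by apply: moduleMl (prime_module HB) (ringXXn k HR Rc) Bg.
  by apply: moduleMl (prime_module HB) _ _; [apply/ringXP|case: fmin].
have [_ _ _ fle] := fmin; have := fle r Rr Br nPr; lia.
Qed.

Lemma minimal_over_mem A : is_prime_ideal (ringX R) A -> A `<=` B ->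
  extX P `<=` A -> ~ (A `<=` extX P) -> contr R B `<=` P -> A (fracX f).
Proof.
move=> HA AB PA nAP BP; have HAm := prime_module HA.
have [g [Rg Ag nPg gmin]] := exists_minimal_over HA PA nAP.
have nPgc : ~ coefs_in P g by move/(_ (size g).-1); rewrite -lead_coefE.
have fg : (size f <= size g)%N by case: fmin => _ _ _; apply; [|apply: AB|].
have [k [h [r [Rh Pr Hrs E]]]] := minimal_over_remainder Rg (AB _ Ag).
have hfE : h * f = c%:P ^+ k * g - r by rewrite E addrK.
have Ahf : A (fracX h * fracX f).
  rewrite -fracXM hfE fracXB fracXM; apply: (moduleB HX HAm).
    exact: moduleMl HAm (ringXXn k HR Rc) Ag.
  by apply/PA/extXP.
have [Ah|//] := primeM HA (proj2 (ringXP R h) Rh) (proj2 (ringXP R f) Rf) Ahf.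
exfalso; have [Ph|nPh] := pselect (coefs_in P h).
  have Pcg : coefs_in P (c%:P ^+ k * g).
    by rewrite E; apply: coefs_inD HPm (coefs_inMr HPm Ph Rf) Pr.
  have := Pcg (size g).-1; rewrite -rmorphXn coefCM -lead_coefE.
  case/(primeM HP (subringX k HR Rc) (lead_coef_in Rg)) => //.
  by move/(primeX HR HP Rc).
have gh : (size g <= size h)%N := gmin h Rh Ah nPh.
have hnz : h != 0 by apply: contra_notN nPh => /eqP ->; apply: coefs_in0 HPm.
have : (size (h * f)%R <= size g)%N.
  rewrite hfE; apply: leq_trans (size_polyD _ _) _; rewrite size_polyN.
  rewrite -rmorphXn size_Cmul ?expf_neq0 ?(prime_notin_neq0 HP nPc) // geq_max leqnn.
  exact: ltnW (leq_trans Hrs fg).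
rewrite size_mul //; move: gh (minimal_over_size BP).
by move: (size h) (size f) (size g) => a b e; lia.
Qed.

End MinimalElement.

Lemma prime_over_extX_unique A B : is_prime_ideal (ringX R) A -> is_prime_ideal (ringX R) B ->
  A `<=` B -> extX P `<=` A -> ~ (A `<=` extX P) -> contr R B `<=` P -> B `<=` A.
Proof.
move=> HA HB AB PA nAP BP; have PB := subset_trans PA AB.
have [f fmin] := exists_minimal_over HB PB (fun BP' => nAP (subset_trans AB BP')).
have Af := minimal_over_mem HB fmin HA AB PA nAP BP.
have [Rf _ nPc _] := fmin.
move=> z Bz; have [g [Rg Ez]] := prime_sub HB Bz; rewrite Ez in Bz *.
have [k [h [r [Rh Pr _ E]]]] := minimal_over_remainder HB fmin Rg Bz.
have Acg : A (fracX ((lead_coef f)%:P ^+ k) * fracX g).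
  rewrite -fracXM E fracXD fracXM; apply: (proj1 (proj2 (prime_module HA))).
    by apply: moduleMl (prime_module HA) (proj2 (ringXP R h) Rh) Af.
  by apply/PA/extXP.
have [Ac|//] := primeM HA (ringXXn k HR (lead_coef_in Rf)) (proj2 (ringXP R g) Rg) Acg.
exfalso; apply: nPc; apply/BP/(contrS AB); split; first exact: lead_coef_in.
by move: Ac; rewrite fracXXn => /(primeX HX HA (ringXC HR (lead_coef_in Rf))).
Qed.

End PrimesOverExtX.

Section PrimesContainingX.
Variable L : fieldType.
Variable R : set L.
Hypothesis HR : is_subring R.
Implicit Types (P : set L) (Q : set {fraction {poly L}}) (f : {poly L}).

Let HX := ringX_subring HR.

Lemma memX_contr0 Q f : is_module (ringX R) Q -> Q (fracX 'X) -> coefs_in R f ->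
  Q (fracX f) <-> contr R Q f`_0.
Proof.
move=> HQ QX Rf; have [_ [QD _]] := HQ.
have QfX : Q (fracX (drop_poly 1 f * 'X)).
  by rewrite fracXM; apply: moduleMl HQ _ QX; apply/ringXP; apply: coefs_in_drop.
split=> [Qf|[_ Qf0]]; last by rewrite (poly_drop1E f) fracXD; apply: QD.
split; first exact: Rf.
have -> : (f`_0)%:P = f - drop_poly 1 f * 'X by rewrite {2}(poly_drop1E f) addrC addKr.
by rewrite fracXB; apply: moduleB HX HQ Qf QfX.
Qed.

Lemma X_mem_between P Q : is_prime_ideal R P -> is_prime_ideal (ringX R) Q ->
  extX P `<=` Q -> Q `<=` PX R P -> ~ (Q `<=` extX P) -> Q (fracX 'X).
Proof.
move=> HP HQ PQ QPX nQP; have HQm := prime_module HQ.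
have [z [Qz nPz]] := not_subset_ex nQP; have [f [Rf Ez]] := prime_sub HQ Qz.
rewrite {z}Ez in Qz nPz; have {nPz} nPf : ~ coefs_in P f by move/extXP.
elim: {f}(size f) {-2}f (leqnn (size f)) Rf Qz nPf => [|n IH] f sf Rf Qf nPf.
  move: sf; rewrite leqn0 size_poly_eq0 => /eqP f0.
  by case: nPf; rewrite f0; apply: coefs_in0 (prime_module HP).
have [_ Pf0] := proj1 (PXP R P f) (QPX _ Qf).
have Qdrop : Q (fracX (drop_poly 1 f) * fracX 'X).
  rewrite -fracXM (_ : _ * 'X = f - (f`_0)%:P); last by rewrite {2}(poly_drop1E f) addrK.
  by rewrite fracXB; apply: moduleB HX HQm Qf _; apply/PQ/extXC; [apply: prime0 HP|].
have Rdrop := coefs_in_drop 1 Rf.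
have [Qd|//] := primeM HQ (proj2 (ringXP R _) Rdrop) (proj2 (ringXP R _) (coefs_inX HR)) Qdrop.
apply: IH Rdrop Qd _; first by rewrite size_drop_poly; move: sf; clear; lia.
by move=> Pd; apply: nPf => -[//|i]; have := Pd i; rewrite coef_drop_poly addn1.
Qed.

Lemma PX_sub_between P Q : is_prime_ideal R P -> is_prime_ideal (ringX R) Q ->
  extX P `<=` Q -> Q `<=` PX R P -> ~ (Q `<=` extX P) -> PX R P `<=` Q.
Proof.
move=> HP HQ PQ QPX nQP; have QX := X_mem_between HP HQ PQ QPX nQP.
move=> _ [p [Rp [Pp0 ->]]]; apply/(memX_contr0 (prime_module HQ) QX Rp).
by split; [apply: Rp|apply/PQ/extXC; [apply: prime0 HP|]].
Qed.

Lemma extX_proper P1 P2 : is_prime_ideal R P2 -> P1 `<` P2 -> extX P1 `<` extX P2.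
Proof.
move=> HP2 [P12 nP21]; split; first by move=> _ [p [Pp ->]]; apply/extXP/(coefs_inS P12).
have [x [P2x nP1x]] := not_subset_ex nP21.
by move=> /(_ _ (extXC (prime0 HP2) P2x)) /extXP /(_ 0%N); rewrite coefC.
Qed.

Lemma PX_proper P1 P2 : is_prime_ideal R P2 -> P1 `<` P2 -> PX R P1 `<` PX R P2.
Proof.
move=> HP2 [P12 nP21]; split.
  by move=> _ [p [Rp [Pp0 ->]]]; apply/PXP; split; last apply: P12.
have [x [P2x nP1x]] := not_subset_ex nP21.
have : PX R P2 (fracX x%:P).
  by apply/PXP; split; [apply: coefs_inC (subring0 HR) (prime_sub HP2 P2x)|rewrite coefC].
by move=> /[swap] /[apply] /PXP [_]; rewrite coefC.
Qed.

End PrimesContainingX.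

Section AdjacentOverX.
Variable L : fieldType.
Variable R : set L.
Variable st : set L -> set L.
Hypothesis Hcl : is_closure R st.
Implicit Types (P : set L).

Let HR : is_subring R := proj1 Hcl.

Lemma extX_PX_adjacent P : quasi_prime R st P ->
  adjacent (ringX R) (starX R st) (extX P) (PX R P).
Proof.
move=> HPq; have HP := quasi_prime_prime HPq.
split; first exact: extX_quasi_prime.
split; first exact: PX_quasi_prime.
split.
  split; first exact: extX_sub_PX (prime_sub HP).
  move=> /(_ _ (PX_X HR (prime0 HP))) /extXP /(_ 1%N); rewrite coefX.
  exact: prime1 HP.
move=> [Q [/quasi_prime_prime HQ [[PQ nQP] [QPX nPXQ]]]].
exact/nPXQ/(PX_sub_between HR HP HQ).
Qed.

End AdjacentOverX.

Section LiftAdjacent.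
Variable L : fieldType.
Variables (R0 : set L) (st0 : set L -> set L).
Hypothesis Hcl0 : is_closure R0 st0.

Let R := ringX R0.
Let st := starX R0 st0.
Let Hcl : is_closure R st := starX_closure st0 (proj1 Hcl0).
Let HR : is_subring R := proj1 Hcl.
Let T := starX R st.

Variables P1 P2 : set {fraction {poly L}}.
Hypothesis P12adj : adjacent R st P1 P2.

Let HP1q : quasi_prime R st P1. Proof. by case: P12adj. Qed.
Let HP2q : quasi_prime R st P2. Proof. by case: P12adj => _ []. Qed.
Let HP1 : is_prime_ideal R P1 := quasi_prime_prime HP1q.
Let HP2 : is_prime_ideal R P2 := quasi_prime_prime HP2q.
Let P12 : P1 `<` P2. Proof. by case: P12adj => _ [_ []]. Qed.

Lemma prime_between_adjacent P : is_prime_ideal R P -> P1 `<=` P -> P `<=` P2 ->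
  P = P1 \/ P = P2.
Proof.
move=> HP P1P PP2.
have [|nP1] := pselect (P = P1); [by left|].
have [|nP2] := pselect (P = P2); [by right|].
exfalso; case: P12adj => _ [_ [_ nomid]]; apply: nomid; exists P; split.
  apply: (sub_quasi_prime_starX Hcl0 HP _ HP2q PP2).
  by have [x [P1x nx]] := quasi_prime_nz HP1q; exists x; split=> //; apply: P1P.
by split; split=> // Psub; [apply: nP1|apply: nP2]; apply/seteqP.
Qed.

Lemma prime_between_extX Q : is_prime_ideal (ringX R) Q ->
  extX P1 `<=` Q -> Q `<=` extX P2 -> contr R Q = P1 \/ Q = extX P2.
Proof.
move=> HQ P1Q QP2.
have P1C : P1 `<=` contr R Q.
  by rewrite -{1}(contr_extX (prime_sub HP1) (prime0 HP1)); apply: contrS.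
have CP2 : contr R Q `<=` P2.
  by rewrite -(contr_extX (prime_sub HP2) (prime0 HP2)); apply: contrS.
case: (prime_between_adjacent (contr_prime HR HQ) P1C CP2) => EQ; [by left|right].
apply/seteqP; split=> //; apply: extX_sub HR (prime_module HQ) _.
by rewrite EQ.
Qed.

Lemma adjacent_through_between Q : quasi_prime (ringX R) T Q ->
  extX P1 `<` Q -> Q `<` extX P2 ->
  adjacent (ringX R) T (extX P1) Q /\ adjacent (ringX R) T Q (extX P2).
Proof.
move=> HQq P1Q QP2; have HQ := quasi_prime_prime HQq.
have qE1 := extX_quasi_prime Hcl HP1q; have qE2 := extX_quasi_prime Hcl HP2q.
have [EQ|EQ] := prime_between_extX HQ (properW P1Q) (properW QP2); last first.
  by case: QP2; rewrite EQ.
have CQ : contr R Q `<=` P1 by rewrite EQ.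
split; split=> //; split=> //; split=> //.
  move=> [Q' [/quasi_prime_prime HQ' [[P1Q' nQ'P1] [Q'Q nQQ']]]].
  exact/nQQ'/(prime_over_extX_unique HR HP1 HQ' HQ Q'Q P1Q' nQ'P1).
move=> [Q' [/quasi_prime_prime HQ' [[QQ' nQ'Q] Q'P2]]].
have P1Q' := subset_trans (properW P1Q) QQ'.
have [EQ'|EQ'] := prime_between_extX HQ' P1Q' (properW Q'P2); last by case: Q'P2; rewrite EQ'.
apply/nQ'Q/(prime_over_extX_unique HR HP1 HQ HQ' QQ' (properW P1Q)) => //.
  by case: P1Q.
by rewrite EQ'.
Qed.

Lemma PX_adjacent : adjacent (ringX R) T (PX R P1) (PX R P2).
Proof.
split; first exact (PX_quasi_prime Hcl HP1q).
split; first exact (PX_quasi_prime Hcl HP2q).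
split; first exact (PX_proper HR HP2 P12).
move=> [Q [/quasi_prime_prime HQ [[P1Q nQP1] [QP2 nP2Q]]]].
have QX : Q (fracX 'X) by apply/P1Q/PX_X/(prime0 HP1).
have P1C : P1 `<=` contr R Q.
  by rewrite -{1}(contr_PX HR (prime_sub HP1)); apply: contrS.
have CP2 : contr R Q `<=` P2.
  by rewrite -(contr_PX HR (prime_sub HP2)); apply: contrS.
have memQ := memX_contr0 HR (prime_module HQ) QX.
case: (prime_between_adjacent (contr_prime HR HQ) P1C CP2) => EQ.
  apply: nQP1 => z Qz; have [f [Rf Ez]] := prime_sub HQ Qz; rewrite Ez in Qz *.
  by apply/PXP; split=> //; rewrite -EQ; apply/(memQ _ Rf).
by apply: nP2Q => _ [p [Rp [Pp0 ->]]]; apply/(memQ _ Rp); rewrite EQ.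
Qed.

Hypothesis Hcat : catenary (ringX R) T.

Lemma extX_adjacent : adjacent (ringX R) T (extX P1) (extX P2).
Proof.
have qE1 := extX_quasi_prime Hcl HP1q; have qE2 := extX_quasi_prime Hcl HP2q.
split=> //; split=> //; split; first exact (extX_proper HP2 P12).
move=> [Q [HQq [P1Q QP2]]].
have [adj1 adj2] := adjacent_through_between HQq P1Q QP2.
have [_ [PX2 _]] := extX_PX_adjacent Hcl HP2q.
have E1PX2 : extX P1 `<` PX R P2.
  split; first apply: subset_trans (extX_sub_PX (prime_sub HP1)) _.
    exact: properW (PX_proper HR HP2 P12).
  by move=> /(_ _ (PX_X HR (prime0 HP2))) /extXP /(_ 1%N); rewrite coefX; apply: prime1 HP1.
pose c i := match i with 0 => extX P1 | 1 => Q | 2 => extX P2 | _ => PX R P2 end.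
pose d i := match i with 0 => extX P1 | 1 => PX R P1 | _ => PX R P2 end.
have Hc : sat_chain (ringX R) T c 3 (extX P1) (PX R P2).
  do 2!split=> //; case=> [_|[_|[_|//]]] //; exact (extX_PX_adjacent Hcl HP2q).
have Hd : sat_chain (ringX R) T d 2 (extX P1) (PX R P2).
  do 2!split=> //; case=> [_|[_|//]]; [exact (extX_PX_adjacent Hcl HP1q)|exact PX_adjacent].
by have := Hcat qE1 PX2 E1PX2 Hc Hd.
Qed.

End LiftAdjacent.

Lemma strongS_starX (L : fieldType) (R : set L) (st : set L -> set L) :
  is_closure R st -> catenary (ringX (ringX R)) (starX (ringX R) (starX R st)) ->
  strongS (ringX R) (starX R st).
Proof. by move=> Hcl Hcat P1 P2 adj; apply: extX_adjacent. Qed.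

Lemma tower_closure (K : fieldType) (D : set K) (st : set K -> set K) n :
  is_closure D st -> is_closure (Dn D st n) (starn D st n).
Proof.
move=> Hcl; elim: n => [//|n IH].
exact: starX_closure (starn D st n) (proj1 IH).
Qed.

Theorem mainTheorem10 (K : fieldType) (D : set K) (st : set K -> set K) :
  is_domain_qf D -> is_semistar D st ->
  univ_catenarian D (stilde D st) -> stably_strongS D (stilde D st).
Proof.
move=> [HD _] Hst Hcat [//|n] _.
exact: strongS_starX (tower_closure n (stilde_closure HD Hst)) (Hcat n.+2 isT).
Qed.
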